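(* Let $\mathcal M=(W,W_\bot,\preccurlyeq,\sqsubseteq,V)$ be a bi-intuitionistic model of finite height $n$, and let $\Sigma$ be a finite set of formulas with $\#\Sigma=s$. Then the number of $\sim_\Sigma$-equivalence classes satisfies $\#(W/{\sim_\Sigma})\le 2^{2(n+1)s}_{n+2}$.
   Context: Formulas: $p\mid\bot\mid\varphi\wedge\psi\mid\varphi\vee\psi\mid\varphi\to\psi\mid\Diamond\varphi\mid\Box\varphi$ over a countably infinite set $\mathbb P$. A bi-intuitionistic model $(W,W_\bot,\preccurlyeq,\sqsubseteq,V)$: $\preccurlyeq,\sqsubseteq$ preorders on $W$, $W_\bot$ upward closed under both, $V:\mathbb P\to2^W$ with $V(p)$ $\preccurlyeq$-upward closed and $\supseteq W_\bot$. Satisfaction: $p$ iff $w\in V(p)$; $\bot$ iff $w\in W_\bot$; $\wedge,\vee$ pointwise; $w\models\varphi\to\psi$ iff for all $v\succcurlyeq w$, $v\models\varphi$ implies $v\models\psi$; $w\models\Diamond\varphi$ iff for all $u\succcurlyeq w$ there is $v\sqsupseteq u$ with $v\models\varphi$; $w\models\Box\varphi$ iff $v\models\varphi$ whenever $w\preccurlyeq u\sqsubseteq v$. $w\prec v$ means $w\preccurlyeq v$ and $v\not\preccurlyeq w$. The height of $w$ is the supremum of $n$ such that there is a chain $w=w_0\prec\cdots\prec w_n$; the height of $\mathcal M$ is the supremum of heights of its worlds. For $R\subseteq W\times W$: forward confluent if $w\preccurlyeq w'$, $wRv$ imply some $v'$ with $v\preccurlyeq v'$, $w'Rv'$; backward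 confluent if $wRv\preccurlyeq v'$ implies some $w'$ with $w\preccurlyeq w'Rv'$. The $\Sigma$-label of $w$ is $\ell(w)=(\ell^+(w);\ell^\Diamond(w))$ with $\ell^+(w)=\{\varphi\in\Sigma:(\mathcal M,w)\models\varphi\}$, $\ell^\Diamond(w)=\{\varphi\in\Sigma:\forall v\sqsupseteq w,\ (\mathcal M,v)\not\models\varphi\}$. A $\Sigma$-bisimulation is a forward and backward confluent $Z\subseteq W\times W$ with $wZv\Rightarrow\ell(w)=\ell(v)$; $\sim_\Sigma$ is the greatest $\Sigma$-bisimulation (the union of all of them), which is an equivalence relation. Superexponential: $2^x_0=x$ and $2^x_{y+1}=2^{2^x_y}$. *)

From Stdlib Require Import Arith List.
Import ListNotations.

Inductive form : Type :=
| Var : nat -> form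
| Bot : form
| And : form -> form -> form
| Or : form -> form -> form
| Imp : form -> form -> form
| Dia : form -> form
| Box : form -> form.

Definition preorder {W : Type} (R : W -> W -> Prop) : Prop :=
  (forall w, R w w) /\ (forall u v w, R u v -> R v w -> R u w).

Record model : Type := Model {
  world : Type;
  wbot : world -> Prop;
  ile : world -> world -> Prop;
  mle : world -> world -> Prop;
  val : nat -> world -> Prop;
  ile_pre : preorder ile;
  mle_pre : preorder mle;
  wbot_up_ile : forall w v, wbot w -> ile w v -> wbot v;
  wbot_up_mle : forall w v, wbot w -> mle w v -> wbot v;
  val_up : forall p w v, val p w -> ile w v -> val p v;
  val_bot : forall p w, wbot w -> val p w
}.

Fixpoint sat (M : model) (phi : form) : world M -> Prop :=
  match phi with
  | Var p => fun w => val M p w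
  | Bot => fun w => wbot M w
  | And a b => fun w => sat M a w /\ sat M b w
  | Or a b => fun w => sat M a w \/ sat M b w
  | Imp a b => fun w => forall v, ile M w v -> sat M a v -> sat M b v
  | Dia a => fun w => forall u, ile M w u -> exists v, mle M u v /\ sat M a v
  | Box a => fun w => forall u v, ile M w u -> mle M u v -> sat M a v
  end.

Definition slt (M : model) (w v : world M) : Prop := ile M w v /\ ~ ile M v w.

Definition strict_chain (M : model) (c : nat -> world M) (k : nat) : Prop :=
  forall i, i < k -> slt M (c i) (c (S i)).

(* The height of M (sup over worlds of the sup of chain lengths, with sup ∅ = 0)
   equals n. *)
Definition model_height (M : model) (n : nat) : Prop :=
  (forall c k, strict_chain M c k -> k <= n) /\
  (n = 0 \/ exists c, strict_chain M c n).

(* Σ-label equality: ℓ⁺ and ℓ^◇ agree on Σ. *)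
Definition label_eq (M : model) (Sigma : list form) (w v : world M) : Prop :=
  (forall phi, In phi Sigma -> (sat M phi w <-> sat M phi v)) /\
  (forall phi, In phi Sigma ->
     ((forall u, mle M w u -> ~ sat M phi u) <-> (forall u, mle M v u -> ~ sat M phi u))).

Definition forward_confluent (M : model) (R : world M -> world M -> Prop) : Prop :=
  forall w w' v, ile M w w' -> R w v -> exists v', ile M v v' /\ R w' v'.

Definition backward_confluent (M : model) (R : world M -> world M -> Prop) : Prop :=
  forall w v v', R w v -> ile M v v' -> exists w', ile M w w' /\ R w' v'.

Definition bisimulation (M : model) (Sigma : list form)
  (Z : world M -> world M -> Prop) : Prop :=
  forward_confluent M Z /\ backward_confluent M Z /\
  (forall w v, Z w v -> label_eq M Sigma w v).

Definition bisim_equiv (M : model) (Sigma : list form) (w v : world M) : Prop :=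
  exists Z, bisimulation M Sigma Z /\ Z w v.

Fixpoint sexp (x y : nat) : nat :=
  match y with
  | 0 => x
  | S y' => 2 ^ (sexp x y')
  end.

From Stdlib Require Import Arith List ClassicalEpsilon Classical Lia.
Import ListNotations.

(* Stratify Σ-bisimilarity by the depth of the ≺-structure:
   [approx 0] relates worlds with equal Σ-labels whose ≼-clusters (the worlds
   ≼-equivalent to them) realize the same Σ-labels, and [approx (k+1)] adds a
   back-and-forth condition matching the strict ≺-successors up to [approx k].
   When every world has height at most n, [approx n] is already a
   Σ-bisimulation, hence refines ~_Σ (Lemma [approx_bisimulation]).

   Counting is done through codes: a relation R is [coded] by N when some map
   code : W -> {0..N-1} satisfies code w = code v -> R w v, so W/R has at most
   N classes.  One generic lemma ([coded_back_forth]) turns a code for a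
   relation R0 and a code on successors into a code for "R0 and the successor
   sets agree up to R", at the price of one exponential.  Iterating it along
   the strata gives the explicit bound [class_bound], which is compared with
   the superexponential 2^{2(n+1)s}_{n+2} in [class_bound_le].  Finally a
   family of pairwise inequivalent worlds injects into the codes. *)

Fixpoint subset_code (P : nat -> Prop) (B : nat) : nat :=
  match B with
  | 0 => 0
  | S B' => 2 * subset_code P B' + if excluded_middle_informative (P B') then 1 else 0
  end.

Lemma subset_code_lt P B : subset_code P B < 2 ^ B.
Proof.
  induction B as [|B IH]; simpl; [lia|].
  destruct (excluded_middle_informative (P B)); lia.
Qed.

Lemma subset_code_inj P Q B :
  subset_code P B = subset_code Q B -> forall i, i < B -> (P i <-> Q i).
Proof.
  induction B as [|B IH]; simpl; intros Heq i Hi; [lia|].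
  destruct (excluded_middle_informative (P B)) as [HP|HP],
           (excluded_middle_informative (Q B)) as [HQ|HQ];
    try lia; destruct (Nat.eq_dec i B) as [->|Hne]; try tauto;
    apply IH; lia.
Qed.

Lemma pair_code_lt a b A B : a < A -> b < B -> a * B + b < A * B.
Proof. intros; nia. Qed.

Lemma pair_code_inj a b a' b' B :
  b < B -> b' < B -> a * B + b = a' * B + b' -> a = a' /\ b = b'.
Proof. intros Hb Hb' Heq. apply (Nat.div_mod_unique B); lia. Qed.

(* R is coded by N: worlds with equal codes below N are R-related, so the
   quotient by (the equivalence generated by) R has at most N classes. *)
Definition coded {W : Type} (R : W -> W -> Prop) (N : nat) : Prop :=
  exists code : W -> nat, (forall w, code w < N) /\ (forall w v, code w = code v -> R w v).

Lemma coded_mono {W : Type} (R R' : W -> W -> Prop) N N' :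
  (forall w v, R w v -> R' w v) -> N <= N' -> coded R N -> coded R' N'.
Proof.
  intros HR HN [code [Hlt Hcode]]. exists code; split; auto.
  intros w; specialize (Hlt w); lia.
Qed.

Lemma coded_refine {W : Type} (R0 R : W -> W -> Prop) (c : W -> nat) A B :
  coded R0 A -> (forall w, c w < B) ->
  (forall w v, R0 w v -> c w = c v -> R w v) ->
  coded (fun w v => R0 w v /\ R w v) (A * B).
Proof.
  intros [c0 [Hlt0 Hc0]] Hlt HR.
  exists (fun w => c0 w * B + c w); split.
  - intros w; apply pair_code_lt; auto.
  - intros w v Heq. apply pair_code_inj in Heq as [H0 H1]; auto.
Qed.

Lemma coded_family_bound {W : Type} (R : W -> W -> Prop) N k (f : nat -> W) :
  coded R N -> (forall i j, i < k -> j < k -> R (f i) (f j) -> i = j) -> k <= N.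
Proof.
  intros [code [Hlt Hcode]] Hf.
  rewrite <- (length_seq k 0), <- (length_map (fun i => code (f i))), <- (length_seq N 0).
  apply NoDup_incl_length.
  - apply NoDup_map_NoDup_ForallPairs; [|apply seq_NoDup].
    intros i j Hi Hj He. apply in_seq in Hi, Hj. apply Hf; auto; lia.
  - intros a Ha. apply in_map_iff in Ha as [i [<- _]].
    apply in_seq. specialize (Hlt (f i)); lia.
Qed.

Definition agree_on {W : Type} (Sigma : list form) (Q : form -> W -> Prop) (w v : W) : Prop :=
  forall phi, In phi Sigma -> (Q phi w <-> Q phi v).

Lemma agree_on_sym {W : Type} Sigma (Q : form -> W -> Prop) w v :
  agree_on Sigma Q w v -> agree_on Sigma Q v w.
Proof. intros H phi Hphi; symmetry; auto. Qed.

Definition sigma_code {W : Type} (Sigma : list form) (Q : form -> W -> Prop) (w : W) : nat :=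
  subset_code (fun i => Q (nth i Sigma Bot) w) (length Sigma).

Lemma sigma_code_agree {W : Type} Sigma (Q : form -> W -> Prop) w v :
  sigma_code Sigma Q w = sigma_code Sigma Q v -> agree_on Sigma Q w v.
Proof.
  intros Heq phi Hphi. destruct (In_nth _ _ Bot Hphi) as [i [Hi <-]].
  exact (subset_code_inj _ _ _ Heq i Hi).
Qed.

Lemma agree_on_coded {W : Type} Sigma (Q : form -> W -> Prop) :
  coded (agree_on Sigma Q) (2 ^ length Sigma).
Proof.
  exists (sigma_code Sigma Q); split;
    [intros; apply subset_code_lt|apply sigma_code_agree].
Qed.

Definition back_forth {W : Type} (R nx : W -> W -> Prop) (w v : W) : Prop :=
  (forall u, nx w u -> exists u', nx v u' /\ R u u') /\
  (forall u', nx v u' -> exists u, nx w u /\ R u u').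

Lemma back_forth_sym {W : Type} (R nx : W -> W -> Prop) w v :
  (forall a b, R a b -> R b a) -> back_forth R nx w v -> back_forth R nx v w.
Proof.
  intros Hsym [Hf Hb]; split.
  - intros u Hu; destruct (Hb u Hu) as [x [Hx Rx]]; eauto.
  - intros u Hu; destruct (Hf u Hu) as [x [Hx Rx]]; eauto.
Qed.

Lemma back_forth_transfer {W : Type} (R nx : W -> W -> Prop) w v w' v' :
  (forall u, nx w u <-> nx w' u) -> (forall u, nx v u <-> nx v' u) ->
  back_forth R nx w v -> back_forth R nx w' v'.
Proof.
  intros Hw Hv [Hf Hb]; split.
  - intros u Hu; apply Hw in Hu. destruct (Hf u Hu) as [x [Hx Rx]].
    exists x; split; auto; apply Hv; auto.
  - intros u Hu; apply Hv in Hu. destruct (Hb u Hu) as [x [Hx Rx]].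
    exists x; split; auto; apply Hw; auto.
Qed.

Definition successor_code {W : Type} (nx : W -> W -> Prop) (c : W -> nat) (B : nat) (w : W) : nat :=
  subset_code (fun i => exists u, nx w u /\ c u = i) B.

Lemma coded_back_forth {W : Type} (R0 R nx : W -> W -> Prop) (c : W -> nat) A B :
  coded R0 A -> (forall u, c u < B) ->
  (forall w v u u', R0 w v -> nx w u -> nx v u' -> c u = c u' -> R u u') ->
  coded (fun w v => R0 w v /\ back_forth R nx w v) (A * 2 ^ B).
Proof.
  intros H0 Hlt HR.
  apply (coded_refine _ _ (successor_code nx c B)); auto.
  { intros; apply subset_code_lt. }
  intros w v Hwv Heq.
  pose proof (subset_code_inj _ _ _ Heq) as Hsame.
  split.
  - intros u Hu. destruct (proj1 (Hsame (c u) (Hlt u)) (ex_intro _ u (conj Hu eq_refl)))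
      as [u' [Hu' Hc]].
    exists u'; split; auto. apply (HR w v); auto.
  - intros u' Hu'. destruct (proj2 (Hsame (c u') (Hlt u')) (ex_intro _ u' (conj Hu' eq_refl)))
      as [u [Hu Hc]].
    exists u; split; auto. apply (HR w v); auto.
Qed.

Lemma ile_refl M w : ile M w w. Proof. apply (proj1 (ile_pre M)). Qed.
Lemma ile_trans M u v w : ile M u v -> ile M v w -> ile M u w. Proof. apply (proj2 (ile_pre M)). Qed.

Lemma sat_persistent M phi : forall w v, ile M w v -> sat M phi w -> sat M phi v.
Proof.
  induction phi; simpl; intros w v Hwv H.
  - eapply val_up; eauto.
  - eapply wbot_up_ile; eauto.
  - destruct H; split; eauto.
  - destruct H; [left|right]; eauto.
  - intros x Hx; apply H; eapply ile_trans; eauto.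
  - intros x Hx; apply H; eapply ile_trans; eauto.
  - intros x y Hx Hy; eapply H; [eapply ile_trans; eauto|eauto].
Qed.

Definition cluster M (w v : world M) : Prop := ile M w v /\ ile M v w.

Lemma cluster_same_cluster M w w' : cluster M w w' -> forall u, cluster M w u <-> cluster M w' u.
Proof. intros [A B] u; unfold cluster; split; intros [C D]; split; eauto using ile_trans. Qed.

Lemma cluster_same_slt M w w' : cluster M w w' -> forall u, slt M w u <-> slt M w' u.
Proof. intros [A B] u; unfold slt; split; intros [C D]; split; eauto using ile_trans. Qed.

Lemma cluster_agree M Sigma w u : cluster M w u -> agree_on Sigma (sat M) w u.
Proof. intros [A B] phi _; split; apply sat_persistent; auto. Qed.

Definition dia_refutes M (phi : form) (w : world M) : Prop :=
  forall u, mle M w u -> ~ sat M phi u.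

Lemma label_eq_agree M Sigma w v :
  label_eq M Sigma w v <-> agree_on Sigma (sat M) w v /\ agree_on Sigma (dia_refutes M) w v.
Proof. reflexivity. Qed.

Lemma label_eq_sym M Sigma w v : label_eq M Sigma w v -> label_eq M Sigma v w.
Proof. rewrite !label_eq_agree; intros [A B]; split; apply agree_on_sym; auto. Qed.

Lemma label_eq_coded M Sigma :
  coded (label_eq M Sigma) (2 ^ length Sigma * 2 ^ length Sigma).
Proof.
  eapply coded_mono; [intros w v H; apply label_eq_agree, H|reflexivity|].
  apply (coded_refine _ _ (sigma_code Sigma (dia_refutes M)));
    auto using agree_on_coded, sigma_code_agree.
  intros; apply subset_code_lt.
Qed.

Definition base_eq M Sigma (w v : world M) : Prop :=
  label_eq M Sigma w v /\ back_forth (label_eq M Sigma) (cluster M) w v.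

Fixpoint approx M Sigma (k : nat) : world M -> world M -> Prop :=
  match k with
  | 0 => base_eq M Sigma
  | S k => fun w v => base_eq M Sigma w v /\ back_forth (approx M Sigma k) (slt M) w v
  end.

Lemma approx_base M Sigma k w v : approx M Sigma k w v -> base_eq M Sigma w v.
Proof. destruct k; simpl; tauto. Qed.

Lemma approx_sym M Sigma k : forall w v, approx M Sigma k w v -> approx M Sigma k v w.
Proof.
  assert (base_sym : forall w v, base_eq M Sigma w v -> base_eq M Sigma v w).
  { intros w v [HL HF]; split; auto using label_eq_sym, back_forth_sym. }
  induction k; simpl; auto.
  intros w v [HB HF]; split; auto using back_forth_sym.
Qed.

Lemma approx_transfer M Sigma k w v w' v' :
  cluster M w w' -> cluster M v v' -> label_eq M Sigma w' v' ->
  approx M Sigma k w v -> approx M Sigma k w' v'.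
Proof.
  intros Cw Cv L HT.
  assert (HB : base_eq M Sigma w' v').
  { split; auto. apply (back_forth_transfer _ _ w v);
      auto using cluster_same_cluster; apply (approx_base _ _ _ _ _ HT). }
  destruct k; simpl in *; auto.
  split; auto. apply (back_forth_transfer _ _ w v); auto using cluster_same_slt; apply HT.
Qed.

Definition base_bound (s : nat) : nat := 2 ^ s * 2 ^ s * 2 ^ (2 ^ s).

Fixpoint class_bound (s k : nat) : nat :=
  match k with
  | 0 => base_bound s
  | S k => base_bound s * 2 ^ class_bound s k
  end.

(* Clusters of base-equivalent worlds are matched by their ◇-labels alone,
   the truth part being constant on clusters. *)
Lemma base_eq_coded M Sigma : coded (base_eq M Sigma) (base_bound (length Sigma)).
Proof.
  apply (coded_back_forth _ _ _ (sigma_code Sigma (dia_refutes M)));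
    auto using label_eq_coded.
  - intros; apply subset_code_lt.
  - intros w v u u' Hwv Hu Hu' Hc. apply label_eq_agree; split;
      [|apply sigma_code_agree; auto].
    intros phi Hphi.
    rewrite <- (cluster_agree M Sigma w u Hu phi Hphi),
            <- (cluster_agree M Sigma v u' Hu' phi Hphi).
    exact (proj1 Hwv phi Hphi).
Qed.

Lemma approx_coded M Sigma k : coded (approx M Sigma k) (class_bound (length Sigma) k).
Proof.
  induction k as [|k [c [Hlt Hc]]]; simpl; [apply base_eq_coded|].
  apply (coded_back_forth _ _ _ c); auto using base_eq_coded.
Qed.

Definition height_le M (w : world M) (m : nat) : Prop :=
  forall c k, strict_chain M c k -> c 0 = w -> k <= m.

Lemma height_le_slt M w u m : slt M w u -> height_le M w (S m) -> height_le M u m.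
Proof.
  intros Hs H c k Hc H0.
  set (c' := fun i => match i with 0 => w | S i => c i end).
  enough (S k <= S m) by lia.
  apply (H c' (S k)); auto.
  intros i Hi; destruct i; simpl; [rewrite H0; auto|]. apply Hc; lia.
Qed.

Lemma height_le_0 M w u : height_le M w 0 -> ~ slt M w u.
Proof.
  intros H Hs. set (c := fun i => match i with 0 => w | _ => u end).
  enough (1 <= 0) by lia. apply (H c 1); auto. intros i Hi; destruct i; [exact Hs|lia].
Qed.

Lemma approx_lift M Sigma m : forall w v,
  height_le M w m -> height_le M v m -> approx M Sigma m w v -> approx M Sigma (S m) w v.
Proof.
  induction m as [|m IH]; intros w v Hw Hv HT.
  - split; auto. split.
    + intros u Hu; destruct (height_le_0 _ _ _ Hw Hu).
    + intros u Hu; destruct (height_le_0 _ _ _ Hv Hu).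
  - destruct HT as [HB [Hf Hb]]. split; auto. split.
    + intros u Hu. destruct (Hf u Hu) as [u' [Hu' R]]. exists u'; split; auto.
      apply IH; eauto using height_le_slt.
    + intros u' Hu'. destruct (Hb u' Hu') as [u [Hu R]]. exists u; split; auto.
      apply IH; eauto using height_le_slt.
Qed.

Lemma approx_bisimulation M Sigma n : model_height M n -> bisimulation M Sigma (approx M Sigma n).
Proof.
  intros [Hh _].
  assert (Hg : forall w, height_le M w n) by (intros w c k Hc _; eauto).
  assert (fw : forward_confluent M (approx M Sigma n)).
  { intros w w' v Hww' HT.
    destruct (classic (ile M w' w)) as [Hback|Hback].
    - destruct (approx_base _ _ _ _ _ HT) as [_ [HF _]].
      destruct (HF w' (conj Hww' Hback)) as [v' [Cv L]].
      exists v'; split; [apply Cv|]. eapply approx_transfer; eauto. split; auto.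
    - assert (Hs : slt M w w') by (split; auto).
      destruct n as [|m]; [destruct (height_le_0 _ _ _ (Hg w) Hs)|].
      destruct HT as [_ [HF _]]. destruct (HF w' Hs) as [v' [Hv' R]].
      exists v'; split; [apply Hv'|]. apply approx_lift; auto; eapply height_le_slt; eauto. }
  split; [exact fw|split].
  - intros w v v' HT Hv.
    destruct (fw v v' w Hv (approx_sym _ _ _ _ _ HT)) as [w' [Hw' R]].
    eauto using approx_sym.
  - intros w v HT. apply (approx_base _ _ _ _ _ HT).
Qed.

Lemma bisim_equiv_nil M (w v : world M) : bisim_equiv M [] w v.
Proof.
  exists (fun _ _ => True); split; auto. split; [|split].
  - intros a a' b _ _; exists b; split; auto; apply ile_refl.
  - intros a b b' _ _; exists a; split; auto; apply ile_refl.
  - intros a b _; split; intros phi [].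
Qed.

Lemma sexp_ge x m : x <= sexp x m.
Proof.
  induction m; simpl; [lia|]. pose proof (Nat.pow_gt_lin_r 2 (sexp x m)); lia.
Qed.

Lemma sexp_mono x x' m : x <= x' -> sexp x m <= sexp x' m.
Proof. intros H; induction m; simpl; auto. apply Nat.pow_le_mono_r; lia. Qed.

Lemma sexp_lt_succ x m : sexp x m < sexp (S x) m.
Proof. induction m; simpl; [lia|]. apply Nat.pow_lt_mono_r; lia. Qed.

(* base_bound s = 2^(2s + 2^s) is dominated by 2^(2^(2s)) once s >= 1. *)
Lemma base_exponent_le s : 1 <= s -> 2 * s + 2 ^ s <= 2 ^ (2 * s).
Proof.
  intros Hs. destruct s as [|s']; [lia|].
  pose proof (Nat.pow_gt_lin_r 2 s' ltac:(lia)).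
  replace (2 * S s') with (S s' + S s') by lia.
  rewrite Nat.pow_add_r, Nat.pow_succ_r'. nia.
Qed.

(* With y = 2^{2(k+1)s}_{k+1}, the inductive step needs
   2s + 2^s + 2^y <= 2^(y+1) <= 2^(2^{2(k+2)s}_{k+1}). *)
Lemma class_bound_le s k : 1 <= s -> class_bound s k <= sexp (2 * (k + 1) * s) (k + 2).
Proof.
  intros Hs.
  assert (Hbase : base_bound s = 2 ^ (2 * s + 2 ^ s))
    by (unfold base_bound; replace (2 * s) with (s + s) by lia; rewrite !Nat.pow_add_r; lia).
  pose proof (base_exponent_le s Hs).
  replace (k + 2) with (S (S k)) by lia.
  induction k as [|k IH]; simpl class_bound; rewrite Hbase.
  - change (sexp (2 * (0 + 1) * s) 2) with (2 ^ (2 ^ (2 * (0 + 1) * s))).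
    apply Nat.pow_le_mono_r; [lia|]. rewrite Nat.mul_1_r. lia.
  - set (y := sexp (2 * (k + 1) * s) (S k)) in *.
    change (sexp (2 * (S k + 1) * s) (S (S (S k))))
      with (2 ^ (2 ^ sexp (2 * (S k + 1) * s) (S k))).
    change (sexp (2 * (k + 1) * s) (S (S k))) with (2 ^ y) in IH.
    rewrite <- Nat.pow_add_r. apply Nat.pow_le_mono_r; [lia|].
    assert (Hy : S y <= sexp (2 * (S k + 1) * s) (S k)).
    { pose proof (sexp_lt_succ (2 * (k + 1) * s) (S k)).
      pose proof (sexp_mono (S (2 * (k + 1) * s)) (2 * (S k + 1) * s) (S k) ltac:(nia)).
      lia. }
    assert (Hc : 2 ^ (2 * s) <= 2 ^ y).
    { apply Nat.pow_le_mono_r; [lia|]. pose proof (sexp_ge (2 * (k + 1) * s) (S k)). nia. }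
    pose proof (Nat.pow_le_mono_r 2 _ _ ltac:(lia) Hy).
    rewrite Nat.pow_succ_r' in *. lia.
Qed.

Lemma bisim_equiv_coded M Sigma n :
  model_height M n -> coded (bisim_equiv M Sigma) (sexp (2 * (n + 1) * length Sigma) (n + 2)).
Proof.
  intros Hh. destruct Sigma as [|phi Sigma'] eqn:HSigma.
  - exists (fun _ => 0); split; [|intros; apply bisim_equiv_nil].
    intros _. replace (n + 2) with (S (S n)) by lia. cbn [sexp].
    apply Nat.neq_0_lt_0, Nat.pow_nonzero; lia.
  - rewrite <- HSigma.
    apply (coded_mono (approx M Sigma n) _ (class_bound (length Sigma) n));
      auto using approx_coded.
    + intros w v HT. exists (approx M Sigma n); split; auto using approx_bisimulation.
    + apply class_bound_le. subst; simpl; lia.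
Qed.

Theorem mainTheorem12 (M : model) (n s : nat) (Sigma : list form) :
  model_height M n ->
  NoDup Sigma -> length Sigma = s ->
  forall (k : nat) (f : nat -> world M),
    (forall i j, i < k -> j < k -> bisim_equiv M Sigma (f i) (f j) -> i = j) ->
    k <= sexp (2 * (n + 1) * s) (n + 2).
Proof.
  intros Hh _ <- k f Hf.
  exact (coded_family_bound _ _ k f (bisim_equiv_coded M Sigma n Hh) Hf).
Qed.
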